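(* Let $f\in K[z]$ be a polynomial of degree $d\ge2$ with $\mathrm{Crit}(f)\cap J(f)\neq\emptyset$. Then there exist a constant $M\ge1$ and $N\ge 1$ such that for every $c\in\mathrm{Crit}(f)\cap J(f)$ and every $n\ge N$, the iterate $f^n$ has at most $M$ critical values (in $K$) lying in the disk $D_n(c)$.
   Context: $K$ is an algebraically closed field of characteristic $0$, complete with respect to a nontrivial nonarchimedean absolute value $|\cdot|$; $D(x,r)=\{y\in K:|y-x|<r\}$. Set $p=\mathrm{res.char}(K)$ if positive and $p=e$ otherwise. $\mathsf{P}^1$ is the Berkovich projective line over $K$, $\mathsf{A}^1=\mathsf{P}^1\setminus\{\infty\}$; $\|g\|_\xi$ is the value at $g$ of the seminorm $\xi$; a point corresponding to a closed disk $\overline D(x,r)$ has $\|g\|_\xi=\sup_{\overline D(x,r)}|g|$ and $\mathrm{diam}(\xi)=r$. $\deg_\xi f$ is the local degree, $\kappa(f)=\min\{\log_p|\deg_\xi f|:\xi\in\mathsf{P}^1\}$. $\mathcal{K}(f)$ is the set of $\xi\in\mathsf{A}^1$ with $f^n(\xi)\not\to\infty$, $J(f)=\partial\mathcal{K}(f)$. $\mathrm{Crit}(f)\subset K$ is the set of zeros of $f'$; critical values of $f^n$ are images under $f^n$ of zeros of $(f^n)'$. The base point $\xi_f$ corresponds to the smallest closed disk in $K$ containing $\mathcal{K}(f)\cap K$, $R_f=\mathrm{diam}(\xi_f)$, $\Xi_f=p^{-\kappa(f)}\|f'\|_{\xi_f}$, and for $s>0$, $x\in K$: $D_s(x)=D(x,R_f\Xi_f^{-s})$.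 *)

From HB Require Import structures.
From mathcomp Require Import all_boot all_order all_algebra.
From mathcomp Require Import boolp classical_sets reals sequences exp.
Set Implicit Arguments. Unset Strict Implicit. Unset Printing Implicit Defensive.
Import Order.TTheory GRing.Theory Num.Theory.
Local Open Scope ring_scope.
Local Open Scope classical_set_scope.

Section Defs.
Variables (R : realType) (K : closedFieldType) (abs : K -> R).

Definition nonarch_abs : Prop :=
  [/\ forall x, 0 <= abs x,
      forall x, abs x = 0 <-> x = 0,
      forall x y, abs (x * y) = abs x * abs y &
      forall x y, abs (x + y) <= Num.max (abs x) (abs y)].

Definition nontrivial_abs : Prop := exists x, abs x != 0 /\ abs x != 1.

Definition complete_abs : Prop :=
  forall u : nat -> K,
    (forall e, 0 < e -> exists N, forall m n, (N <= m)%N -> (N <= n)%N ->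
        abs (u m - u n) < e) ->
    exists l, forall e, 0 < e -> exists N, forall n, (N <= n)%N -> abs (u n - l) < e.

(* residue characteristic: the prime q with |q| < 1 (q lies in the maximal
   ideal), or 0 if there is none *)
Definition res_char : nat := xget 0%N [set q | prime q /\ abs q%:R < 1].

Definition pbase : R := if (0 < res_char)%N then (res_char%:R : R) else expR 1.

Definition logp (x : R) : R := ln x / ln pbase.

Definition odisk (x : K) (r : R) : set K := [set y | abs (y - x) < r].

Definition fiter (f : {poly K}) (n : nat) : {poly K} := iter n (fun g => f \Po g) 'X.
Definition orbit (f : {poly K}) (n : nat) (x : K) : K := iter n (fun y => f.[y]) x.

Definition escapes (f : {poly K}) (x : K) : Prop :=
  forall B : R, exists N, forall n, (N <= n)%N -> B < abs (orbit f n x).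

Definition filled (f : {poly K}) : set K := [set x | ~ escapes f x].

(* J(f) ∩ K : type-I points of the boundary of K(f) in the Berkovich line *)
Definition julia (f : {poly K}) : set K :=
  [set x | filled f x /\ forall r, 0 < r -> exists y, abs (y - x) < r /\ escapes f y].

Definition crit (f : {poly K}) : set K := [set c | root f^`() c].

Definition critvals (f : {poly K}) (n : nat) : set K :=
  [set v | exists w, root (fiter f n)^`() w /\ v = (fiter f n).[w]].

(* R_f = diam(xi_f): diameter of the smallest closed disk containing K(f) ∩ K *)
Definition Rf (f : {poly K}) : R :=
  sup [set abs (x - y) | x in filled f & y in filled f].

(* the closed disk of xi_f (union of closed disks of radius R_f centred at
   points of K(f) ∩ K, which in the ultrametric setting is one disk) *)
Definition xi_disk (f : {poly K}) : set K :=
  [set y | exists2 x, filled f x & abs (y - x) <= Rf f].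

Definition norm_xi (f g : {poly K}) : R := sup [set abs g.[y] | y in xi_disk f].

Definition rootseq (q : {poly K}) : seq K := sval (closed_field_poly_normal q).

(* local degree of f at the point zeta(a,r) of A^1 (r >= 0; r = 0 is the
   type I point a): number of zeros of f - f(a), with multiplicity, in the
   closed disk of radius r around a *)
Definition local_deg (f : {poly K}) (a : K) (r : R) : nat :=
  count (fun z => abs (z - a) <= r) (rootseq (f - (f.[a])%:P)).

(* set of local degrees deg_xi f over xi in P^1 (the point infinity has local
   degree d = deg f) *)
Definition local_degs (f : {poly K}) : set nat :=
  [set m | m = (size f).-1 \/ exists a r, 0 <= r /\ m = local_deg f a r].

Definition kappa (f : {poly K}) : R :=
  inf [set logp (abs (m%:R)) | m in local_degs f].

Definition Xi (f : {poly K}) : R := powR pbase (- kappa f) * norm_xi f f^`().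

Definition Ds (f : {poly K}) (s : R) (x : K) : set K :=
  odisk x (Rf f * powR (Xi f) (- s)).

End Defs.

(* Every critical value of [f^n] is [f^j(c')] for a critical point [c'] and
   [1 <= j <= n], so it suffices to bound, for each [c'], the number of times
   [j <= n] at which the orbit of [c'] visits [D_n(c)].  Near the critical point
   [c] the map is quadratically flat: [|f^m(u) - f^m(c)| <= L^m |u - c|^2] on
   [D(c, eps)] as long as [L^m eps <= 1].  So if some point of [D(c, eps)]
   returned to it after [m] steps, [f^m] would map [D(c, eps)] into itself and
   no point near [c] could escape, contradicting [c \in J(f)].  Moreover
   [Xi_f > 1]: where an escaping orbit near [c] leaves the disk of [xi_f],
   comparing the Gauss norm of [f(v + lambda z) - f(v)] with the values of
   [f'] on that disk (a discrete Fourier argument over the [N]-th roots of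
   unity, for a prime [N] with [|N| = 1]) yields a point with
   [|f'| > |deg_xi f|].  Hence with
   [eps = R_f Xi_f^{-n}] and [L <= Xi_f^q], two visit times differ by more than
   [n / 2q], and there are at most [2q + 1] visits per critical point. *)

From Pilot Require Import Defs.
From HB Require Import structures.
From mathcomp Require Import all_boot all_order all_algebra.
From mathcomp Require Import boolp classical_sets reals sequences exp.
From mathcomp Require Import separable.
From mathcomp Require cyclic cyclotomic.
From mathcomp Require Import ring lra zify.
Import Order.TTheory GRing.Theory Num.Theory.
Local Open Scope ring_scope.
Local Open Scope classical_set_scope.

Set Implicit Arguments.
Unset Strict Implicit.

Local Notation orbit := Defs.orbit.

Lemma le_sum_mem (R : numDomainType) (I : eqType) (r : seq I) (F : I -> R) i :
  i \in r -> (forall j, 0 <= F j) -> F i <= \sum_(j <- r) F j.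
Proof. by move=> ir F0; rewrite (big_rem i) //= lerDl sumr_ge0. Qed.

Lemma dvdn_subnD N k j : (k < N)%N -> (j < N)%N -> (N %| N - k + j)%N = (j == k).
Proof.
move=> kN jN; have [jk|kj] := ltnP j k.
  by rewrite /dvdn modn_small; apply/idP/eqP; lia.
have -> : (N - k + j = j - k + N)%N by lia.
by rewrite /dvdn modnDr modn_small; apply/idP/eqP; lia.
Qed.

Lemma sum_prim_root_expr (F : idomainType) (z : F) N e : N.-primitive_root z ->
  \sum_(i < N) (z ^+ e) ^+ i = if (N %| e)%N then N%:R else 0.
Proof.
move=> zN; rewrite (prim_order_dvd zN); have [-> | ze1] := eqVneq (z ^+ e) 1.
  by rewrite (eq_bigr (fun=> 1)) ?sumr_const ?card_ord // => i _; rewrite expr1n.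
have : (z ^+ e - 1) * \sum_(i < N) (z ^+ e) ^+ i = 0.
  by rewrite -subrX1 -exprM mulnC exprM (prim_expr_order zN) expr1n subrr.
by move/eqP; rewrite mulf_eq0 subr_eq0 (negPf ze1) => /eqP.
Qed.

Lemma exists_prim_root (F : closedFieldType) N :
  [pchar F] =i pred0 -> (0 < N)%N -> exists z : F, N.-primitive_root z.
Proof.
move=> F0 N0; have [r Dp] := closed_field_poly_normal ('X^N - 1 : {poly F}).
rewrite (monicP _) ?monicXnsubC // scale1r in Dp.
have rN : all N.-unity_root r by apply/allP=> z; rewrite -root_prod_XsubC -Dp.
have sz_r : (N < (size r).+1)%N by rewrite -(size_prod_XsubC r id) -Dp size_XnsubC.
have [|z] := hasP (cyclic.has_prim_root N0 rN _ sz_r); last by exists z.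
rewrite -separable_prod_XsubC -Dp cyclotomic.separable_Xn_sub_1 //.
by rewrite (pcharf0P _).1 // -lt0n.
Qed.

Lemma exists_expr_ge (R : archiRealFieldType) (X B : R) : 1 < X -> exists n, B <= X ^+ n.
Proof.
move=> X1; have X10 : 0 < X - 1 by rewrite subr_gt0.
have bernoulli n : 1 + n%:R * (X - 1) <= X ^+ n.
  elim: n => [|n IH]; first by rewrite mul0r addr0.
  rewrite exprS; apply: le_trans (_ : X * (1 + n%:R * (X - 1)) <= _).
    rewrite -subr_ge0 -addn1 natrD.
    have -> : X * (1 + n%:R * (X - 1)) - (1 + (n%:R + 1) * (X - 1)) = n%:R * (X - 1) ^+ 2.
      by rewrite expr2; ring.
    by rewrite mulr_ge0 ?sqr_ge0.
  by rewrite ler_wpM2l // ltW // (lt_trans ltr01).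
have := archi_boundP (divr_ge0 (normr_ge0 B) (ltW X10)).
set n := Num.Def.archi_bound _ => Bn; exists n; apply: le_trans (bernoulli n).
rewrite ltr_pdivrMr // in Bn; apply: le_trans (ler_norm B) _.
by rewrite (le_trans (ltW Bn)) // lerDr.
Qed.

Lemma size_sparse_le (s : seq nat) n k : (0 < n)%N -> uniq s ->
  all (fun j => j <= n)%N s ->
  {in s &, forall j1 j2, (j1 < j2)%N -> (n < k * (j2 - j1))%N} -> (size s <= k.+1)%N.
Proof.
move=> n0 s_uniq s_le sparse; pose g j := (j * k %/ n)%N.
have g_inj : {in s &, injective g}.
  suff g_neq j1 j2 : j1 \in s -> j2 \in s -> (j1 < j2)%N -> g j1 != g j2.
    move=> j1 j2 j1s j2s same; case: (ltngtP j1 j2) => // lt.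
    - by have := g_neq _ _ j1s j2s lt; rewrite same eqxx.
    - by have := g_neq _ _ j2s j1s lt; rewrite same eqxx.
  move=> j1s j2s j12; apply/negP => /eqP same_g.
  have := sparse _ _ j1s j2s j12; rewrite mulnBr mulnC [(k * j1)%N]mulnC.
  have := divn_eq (j2 * k) n; have := divn_eq (j1 * k) n; rewrite -/(g j1) -/(g j2) same_g.
  have := ltn_pmod (j2 * k) n0; lia.
rewrite -(size_map g) -(size_iota 0 k.+1) uniq_leq_size ?map_inj_in_uniq //.
move=> _ /mapP[j js ->]; rewrite mem_iota add0n ltnS /g.
apply: leq_trans (_ : n * k %/ n <= _)%N; last by rewrite mulKn.
by rewrite leq_div2r // leq_mul2r (allP s_le) ?orbT.
Qed.

Section Ultrametric.
Variables (R : realType) (K : closedFieldType) (abs : K -> R).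
Hypothesis Habs : nonarch_abs abs.
Hypothesis Hchar : [pchar K] =i pred0.

Lemma abs_ge0 x : 0 <= abs x. Proof. by case: Habs. Qed.
Lemma abs_eq0 x : abs x = 0 <-> x = 0. Proof. by case: Habs. Qed.
Lemma absM x y : abs (x * y) = abs x * abs y. Proof. by case: Habs. Qed.
Lemma absD_le_max x y : abs (x + y) <= Num.max (abs x) (abs y).
Proof. by case: Habs. Qed.

Lemma abs0 : abs 0 = 0. Proof. exact/abs_eq0. Qed.

Lemma abs_gt0 x : x != 0 -> 0 < abs x.
Proof. by move=> x0; rewrite lt_def abs_ge0 andbT; apply: contra_neq x0 => /abs_eq0. Qed.

Lemma abs1 : abs 1 = 1.
Proof.
have a1 : abs 1 != 0 by rewrite gt_eqF // abs_gt0 ?oner_eq0.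
by apply: (mulIf a1); rewrite mul1r -absM mulr1.
Qed.

Lemma absN x : abs (- x) = abs x.
Proof.
have absN1 : abs (-1) = 1.
  apply/eqP; rewrite -(@eqrXn2 _ 2) ?abs_ge0 ?ler01 //.
  by rewrite expr2 -absM mulrNN mulr1 abs1 expr1n.
by rewrite -mulN1r absM absN1 mul1r.
Qed.

Lemma abs_distC x y : abs (x - y) = abs (y - x).
Proof. by rewrite -absN opprB. Qed.

Lemma absX x n : abs (x ^+ n) = abs x ^+ n.
Proof. by elim: n => [|n IH]; rewrite ?abs1 // !exprS absM IH. Qed.

Lemma absV x : abs x^-1 = (abs x)^-1.
Proof.
have [->|x0] := eqVneq x 0; first by rewrite invr0 abs0 invr0.
by apply: (mulfI (lt0r_neq0 (abs_gt0 x0))); rewrite -absM !divff ?abs1 // gt_eqF ?abs_gt0.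
Qed.

Lemma absD_le x y B : abs x <= B -> abs y <= B -> abs (x + y) <= B.
Proof. by move=> hx hy; apply: le_trans (absD_le_max x y) _; rewrite ge_max hx hy. Qed.

Lemma absD_lt x y B : abs x < B -> abs y < B -> abs (x + y) < B.
Proof. by move=> hx hy; apply: le_lt_trans (absD_le_max x y) _; rewrite gt_max hx hy. Qed.

Lemma abs_le_dist x y B : abs x <= B -> abs (y - x) <= B -> abs y <= B.
Proof. by move=> hx hyx; rewrite -(subrK x y); apply: absD_le. Qed.

Lemma abs_dist_lt_trans x y z B : abs (x - y) < B -> abs (y - z) < B -> abs (x - z) < B.
Proof. by move=> xy yz; rewrite -[x](subrK y) -addrA; apply: absD_lt. Qed.

Lemma abs_sum_le (I : Type) (r : seq I) (P : pred I) (F : I -> K) B :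
  0 <= B -> (forall i, P i -> abs (F i) <= B) -> abs (\sum_(i <- r | P i) F i) <= B.
Proof.
move=> B0 hF; apply: (big_ind (fun x => abs x <= B)) => //.
- by rewrite abs0.
- by move=> ? ?; apply: absD_le.
Qed.

Lemma abs_sum_lt (I : Type) (r : seq I) (P : pred I) (F : I -> K) B :
  0 < B -> (forall i, P i -> abs (F i) < B) -> abs (\sum_(i <- r | P i) F i) < B.
Proof.
move=> B0 hF; apply: (big_ind (fun x => abs x < B)) => //.
- by rewrite abs0.
- by move=> ? ?; apply: absD_lt.
Qed.

Lemma absD_small x y : abs y < abs x -> abs (x + y) = abs x.
Proof.
move=> yx; apply/eqP; rewrite eq_le absD_le ?(ltW yx) //= leNgt.
apply/negP => xyx.
have yx' : abs (- y) < abs x by rewrite absN.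
by have := absD_lt xyx yx'; rewrite addrK ltxx.
Qed.

Lemma abs_natr_le1 n : abs n%:R <= 1.
Proof. by elim: n => [|n IH]; rewrite ?abs0 ?ler01 // -addn1 natrD absD_le ?abs1. Qed.

Lemma abs_intr_le1 (z : int) : abs z%:~R <= 1.
Proof. by case: z => n; rewrite ?NegzE ?mulrNz ?absN abs_natr_le1. Qed.

Lemma abs_natr_gt0 n : (0 < n)%N -> 0 < abs n%:R.
Proof. by move=> n0; rewrite abs_gt0 // (pcharf0P _).1 // -lt0n. Qed.

Definition majorant (p : {poly K}) (T : R) := \sum_(i < size p) abs p`_i * T ^+ i.

Lemma majorant_term_ge0 (p : {poly K}) T (i : nat) : 0 <= T -> 0 <= abs p`_i * T ^+ i.
Proof. by move=> T0; rewrite mulr_ge0 ?exprn_ge0 ?abs_ge0. Qed.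

Lemma majorant_ge0 (p : {poly K}) T : 0 <= T -> 0 <= majorant p T.
Proof. by move=> T0; apply: sumr_ge0 => i _; apply: majorant_term_ge0. Qed.

Lemma majorant_term_le (p : {poly K}) T (i : 'I_(size p)) :
  0 <= T -> abs p`_i * T ^+ i <= majorant p T.
Proof.
move=> T0; apply: (le_sum_mem (F := fun j : 'I_(size p) => abs p`_j * T ^+ j)).
  exact: mem_index_enum.
by move=> j; apply: majorant_term_ge0.
Qed.

Lemma horner_le_majorant (p : {poly K}) x T : abs x <= T -> abs p.[x] <= majorant p T.
Proof.
move=> xT; have T0 : 0 <= T := le_trans (abs_ge0 x) xT.
rewrite horner_coef; apply: abs_sum_le => //; first exact: majorant_ge0.
move=> i _; apply: le_trans (majorant_term_le i T0).
rewrite absM // absX // ler_wpM2l ?abs_ge0 //.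
by rewrite lerXn2r ?nnegrE ?abs_ge0.
Qed.

Lemma abs_subXX_le x y T i : abs x <= T -> abs y <= T -> 1 <= T ->
  abs (x ^+ i - y ^+ i) <= abs (x - y) * T ^+ i.
Proof.
move=> xT yT T1; have T0 : 0 <= T := le_trans ler01 T1.
rewrite subrXX absM // ler_wpM2l ?abs_ge0 //.
apply: abs_sum_le => [|j _]; first exact: exprn_ge0.
rewrite absM // !absX //; apply: le_trans (_ : T ^+ (i.-1 - j) * T ^+ j <= _).
  by rewrite ler_pM ?exprn_ge0 ?abs_ge0 ?lerXn2r ?nnegrE ?abs_ge0.
rewrite -exprD ler_weXn2l //; case: j => j /=.
by case: i => // i; rewrite ltnS => ji; rewrite subnK.
Qed.

Lemma horner_lipschitz (p : {poly K}) x y T : abs x <= T -> abs y <= T -> 1 <= T ->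
  abs (p.[x] - p.[y]) <= abs (x - y) * majorant p T.
Proof.
move=> xT yT T1; have T0 : 0 <= T := le_trans ler01 T1.
rewrite !horner_coef -sumrB; apply: abs_sum_le => [|i _].
  by rewrite mulr_ge0 ?abs_ge0 ?majorant_ge0.
rewrite -mulrBr absM //; apply: le_trans (_ : abs p`_i * (abs (x - y) * T ^+ i) <= _).
  by rewrite ler_wpM2l ?abs_ge0 ?abs_subXX_le.
by rewrite mulrCA ler_wpM2l ?abs_ge0 ?majorant_term_le.
Qed.

(* At a critical point [c], [p - p(c)] vanishes to order two. *)
Definition crit_quotient (p : {poly K}) (c : K) := (p - p.[c]%:P) %/ ('X - c%:P) ^+ 2.

Lemma crit_quotientE (p : {poly K}) c : root p^`() c ->
  p - p.[c]%:P = crit_quotient p c * ('X - c%:P) ^+ 2.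
Proof.
move=> pc.
have /factor_theorem [q pq] : root (p - p.[c]%:P) c.
  by rewrite /root hornerD hornerN hornerC subrr.
have /factor_theorem [q2 q2E] : root q c.
  move: pc; rewrite /root -[p^`()](subr0 _) -(derivC (p.[c])) -derivB pq derivM.
  by rewrite derivXsubC !hornerE subrr mulr0 add0r.
rewrite /crit_quotient pq q2E -mulrA -expr2 mulpK //.
by rewrite expf_neq0 // polyXsubC_eq0.
Qed.

Lemma horner_crit_quadratic (p : {poly K}) c x T : root p^`() c -> abs x <= T ->
  abs (p.[x] - p.[c]) <= abs (x - c) ^+ 2 * majorant (crit_quotient p c) T.
Proof.
move=> pc xT; have := congr1 (horner^~ x) (crit_quotientE pc).
rewrite !hornerE /= => ->.
by rewrite -mulrA -expr2 absM absX mulrC ler_wpM2l ?exprn_ge0 ?abs_ge0 ?horner_le_majorant.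
Qed.

Lemma prime_abs1_above B : exists p, [/\ prime p, (B < p)%N & abs p%:R = 1].
Proof.
have [p1 Bp1 p1P] := prime_above B; have [p2 p12 p2P] := prime_above p1.
have unit_or_lt n : abs (n%:R : K) = 1 \/ abs (n%:R : K) < 1.
  by have := abs_natr_le1 n; rewrite le_eqVlt => /orP[/eqP|]; [left|right].
have [p1u|p1lt] := unit_or_lt p1; first by exists p1.
have [p2u|p2lt] := unit_or_lt p2; first by exists p2; rewrite (ltn_trans Bp1).
exfalso; have p12C : coprime p1 p2.
  by rewrite prime_coprime // dvdn_prime2 // ltn_eqF.
have [u [v uv]] := Bezoutz p1 p2.
have : abs ((u * p1%:Z + v * p2%:Z)%:~R : K) < 1.
  rewrite intrD !intrM; apply: absD_lt; rewrite absM.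
    by apply: le_lt_trans p1lt; rewrite ler_piMl ?abs_ge0 ?abs_intr_le1.
  by apply: le_lt_trans p2lt; rewrite ler_piMl ?abs_ge0 ?abs_intr_le1.
by rewrite uv /gcdz /= (eqP p12C) abs1 ltxx.
Qed.

Lemma abs_prim_root z N : N.-primitive_root z -> abs z = 1.
Proof.
move=> zN; have /eqP : abs z ^+ N = 1 by rewrite -absX (prim_expr_order zN) abs1.
by rewrite pexpr_eq1 ?abs_ge0 ?(prim_order_gt0 zN) // => /eqP.
Qed.

Lemma coef_dft (H : {poly K}) z N k : N.-primitive_root z ->
  (size H <= N)%N -> (k < N)%N ->
  N%:R * H`_k = \sum_(i < N) (z ^+ (N - k)) ^+ i * H.[z ^+ i].
Proof.
move=> zN HN kN.
under eq_bigr => i _ do rewrite (horner_coef_wide _ HN) mulr_sumr.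
rewrite exchange_big /=.
rewrite (eq_bigr (fun j : 'I_N => H`_j * (if j == k :> nat then N%:R else 0))); last first.
  move=> j _; rewrite -(dvdn_subnD kN (ltn_ord j)) -(sum_prim_root_expr _ zN) mulr_sumr.
  apply: eq_bigr => i _; rewrite mulrCA -!exprM -exprD.
  by rewrite mulnDl (mulnC i j).
rewrite (bigD1 (Ordinal kN)) //= eqxx big1 ?addr0 ?(mulrC N%:R) // => j.
by rewrite -val_eqE /= => /negPf ->; rewrite mulr0.
Qed.

Lemma exists_root_unity_coef_le (H : {poly K}) z N k : N.-primitive_root z ->
  abs N%:R = 1 -> (size H <= N)%N -> (k < N)%N ->
  exists i : 'I_N, abs H`_k <= abs H.[z ^+ i].
Proof.
move=> zN N1 HN kN; apply/not_existsP => all_lt.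
have Hk0 : 0 < abs H`_k.
  have N0 : (0 < N)%N := prim_order_gt0 zN.
  by apply: le_lt_trans (abs_ge0 H.[z ^+ 0]) _; rewrite ltNge; apply/negP/(all_lt (Ordinal N0)).
suff : abs (N%:R * H`_k) < abs H`_k by rewrite absM N1 mul1r ltxx.
rewrite (coef_dft zN HN kN); apply: abs_sum_lt => // i _.
by rewrite absM !absX (abs_prim_root zN) !expr1n mul1r ltNge; apply/negP/all_lt.
Qed.

Lemma coef_comp_le_horner (P : {poly K}) v lam k : lam != 0 ->
  exists y, abs (y - v) <= abs lam /\
    abs (P \Po (lam *: 'X + v%:P))`_k <= abs P.[y].
Proof.
move=> lam0; set H := P \Po _.
have [N [NP HkN N1]] := prime_abs1_above (maxn (size H) k).
have [z zN] := exists_prim_root Hchar (prime_gt0 NP).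
rewrite gtn_max in HkN; case/andP: HkN => HN kN.
have [i Hki] := exists_root_unity_coef_le zN N1 (ltnW HN) kN.
exists (lam * z ^+ i + v); rewrite addrK absM absX (abs_prim_root zN) expr1n mulr1.
by split=> //; move: Hki; rewrite /H horner_comp !hornerE.
Qed.

Definition dominant (P : {poly K}) (m : nat) (g : R) :=
  [/\ 0 < g, forall k, abs P`_k <= g, abs P`_m = g &
      forall k, (m < k)%N -> abs P`_k < g].

Lemma dominantC c : c != 0 -> dominant c%:P 0 (abs c).
Proof.
move=> c0; split; rewrite ?coefC ?abs_gt0 //.
  by move=> [|k]; rewrite coefC //= abs0 abs_ge0.
by move=> [|k] // _; rewrite coefC /= abs0 abs_gt0.
Qed.

Lemma dominantM P Q m1 m2 g1 g2 :
  dominant P m1 g1 -> dominant Q m2 g2 -> dominant (P * Q) (m1 + m2) (g1 * g2).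
Proof.
case=> g1p P_le P_m1 P_lt [g2p Q_le Q_m2 Q_lt].
have term_le i j : abs (P`_j * Q`_(i - j)) <= g1 * g2.
  by rewrite absM ler_pM ?abs_ge0.
have term_lt i j : (m1 < j)%N \/ (m2 < i - j)%N -> abs (P`_j * Q`_(i - j)) < g1 * g2.
  case=> lt_m; rewrite absM.
    by apply: le_lt_trans (_ : abs P`_j * g2 < _); rewrite ?ler_wpM2l ?abs_ge0 ?ltr_pM2r ?P_lt.
  by apply: le_lt_trans (_ : g1 * abs Q`_(i - j) < _); rewrite ?ler_wpM2r ?abs_ge0 ?ltr_pM2l ?Q_lt.
have g_gt0 : 0 < g1 * g2 by rewrite mulr_gt0.
split=> // [k | | k mk]; rewrite coefM.
- by apply: abs_sum_le => [|j _]; [apply: ltW | apply: term_le].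
- have m1m : (m1 < (m1 + m2).+1)%N by rewrite ltnS leq_addr.
  rewrite (bigD1 (Ordinal m1m)) //= addKn absD_small absM P_m1 Q_m2 //.
  apply: abs_sum_lt => // j; rewrite -val_eqE /= => jm1; apply: term_lt.
  have [|jm] := ltnP m1 j; first by left.
  by right; rewrite ltn_subRL ltn_add2r ltn_neqAle jm1.
- apply: abs_sum_lt => // j _; apply: term_lt.
  have [|jm] := ltnP m1 j; first by left.
  by right; rewrite ltn_subRL (leq_ltn_trans _ mk) // leq_add2r.
Qed.

Lemma dominant_horner1_le P m g : dominant P m g -> abs P.[1] <= g.
Proof.
case=> g_gt0 P_le _ _; rewrite horner_coef.
by apply: abs_sum_le => [|i _]; [apply: ltW | rewrite expr1n mulr1].
Qed.

Section LinearFactors.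
Variables (lam v : K).
Hypothesis lam0 : lam != 0.

Let q := lam *: 'X + v%:P.

Lemma dominant_linear z : dominant (q - z%:P) (abs (z - v) <= abs lam)%R
  (Num.max (abs lam) (abs (z - v))).
Proof.
have lam_gt0 := abs_gt0 lam0.
have qE k : abs (q - z%:P)`_k = if k == 0%N then abs (z - v) else if k == 1%N then abs lam else 0.
  rewrite coefB coefD coefZ coefX !coefC; case: k => [|[|k]] /=.
  - by rewrite mulr0 add0r abs_distC.
  - by rewrite mulr1 addr0 subr0.
  - by rewrite mulr0 addr0 subr0 abs0.
have [zv|vz] := leP (abs (z - v)) (abs lam).
- split=> //; last by case=> [|[|k]] // _; rewrite qE.
  by case=> [|[|k]]; rewrite qE //= ltW.
- have vz_gt0 : 0 < abs (z - v) := le_lt_trans (abs_ge0 lam) vz.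
  split=> //; last by case=> [|[|k]] // _; rewrite qE.
  by case=> [|[|k]]; rewrite qE //= ltW.
Qed.

Lemma dominant_prod (rs : seq K) :
  dominant (\prod_(z <- rs) (q - z%:P)) (count (fun z => abs (z - v) <= abs lam) rs)
    (\prod_(z <- rs) Num.max (abs lam) (abs (z - v))).
Proof.
elim: rs => [|z rs IH]; first by rewrite !big_nil -abs1; apply/dominantC/oner_neq0.
by rewrite !big_cons; apply/dominantM/IH/dominant_linear.
Qed.

End LinearFactors.

Lemma rootseqE (p : {poly K}) : p = lead_coef p *: \prod_(z <- rootseq p) ('X - z%:P).
Proof. exact: svalP (closed_field_poly_normal p). Qed.

Section LocalDegree.
Variable f : {poly K}.
Hypothesis f_nonconst : (1 < size f)%N.

Lemma size_subC c : size (f - c%:P) = size f.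
Proof. by rewrite size_polyDl // size_polyN (leq_ltn_trans (size_polyC_leq1 _)). Qed.

Lemma subC_neq0 c : f - c%:P != 0.
Proof. by rewrite -size_poly_gt0 size_subC (ltn_trans _ f_nonconst). Qed.

Lemma size_rootseq_subC c : size (rootseq (f - c%:P)) = (size f).-1.
Proof.
have := size_subC c; rewrite {1}(rootseqE (f - c%:P)) size_scale ?lead_coef_eq0 ?subC_neq0 //.
by rewrite size_prod_XsubC => <-.
Qed.

Lemma local_deg_gt0 v r : 0 <= r -> (0 < local_deg abs f v r)%N.
Proof.
move=> r0; rewrite /local_deg -has_count; apply/hasP; exists v; last by rewrite subrr abs0.
have : root (f - f.[v]%:P) v by rewrite /root !hornerE subrr.
rewrite {1}(rootseqE (f - f.[v]%:P)) /root hornerZ mulf_eq0 lead_coef_eq0.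
by rewrite (negPf (subC_neq0 _)) -/(root _ v) root_prod_XsubC.
Qed.

Lemma dominant_local_deg v lam : lam != 0 ->
  exists g, dominant ((f - f.[v]%:P) \Po (lam *: 'X + v%:P)) (local_deg abs f v (abs lam)) g.
Proof.
move=> lam0; set p := f - f.[v]%:P.
have lc_neq0 : lead_coef p != 0 by rewrite lead_coef_eq0 subC_neq0.
have pE : p \Po (lam *: 'X + v%:P) =
    (lead_coef p)%:P * \prod_(z <- rootseq p) ((lam *: 'X + v%:P) - z%:P).
  rewrite {1}[p]rootseqE comp_polyZ -mul_polyC; congr (_ * _).
  elim: (rootseq p) => [|z rs IH]; first by rewrite !big_nil comp_polyC.
  by rewrite !big_cons comp_polyM IH comp_polyB comp_polyX comp_polyC.
have := dominantM (dominantC lc_neq0) (@dominant_prod lam v lam0 (rootseq p)).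
by rewrite -pE add0n; exists (abs (lead_coef p) *
  \prod_(z <- rootseq p) Num.max (abs lam) (abs (z - v))).
Qed.

Lemma deriv_lower_bound u v : u != v -> exists2 y, abs (y - v) <= abs (u - v) &
  abs (f.[u] - f.[v]) * abs (local_deg abs f v (abs (u - v)))%:R / abs (u - v)
    <= abs f^`().[y].
Proof.
move=> uv; set lam := u - v; set m := local_deg _ _ _ _.
have lam0 : lam != 0 by rewrite subr_eq0.
set q := lam *: 'X + v%:P; set G := (f - f.[v]%:P) \Po q.
have [g Gdom] := dominant_local_deg v lam0; rewrite -/q -/G -/m in Gdom.
have m_gt0 : (0 < m)%N by apply: local_deg_gt0; apply: abs_ge0.
have G1 : G.[1] = f.[u] - f.[v] by rewrite /G horner_comp !hornerE subrK.
have coef_deriv_comp : (f^`() \Po q)`_m.-1 = G`_m *+ m / lam.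
  have := coef_deriv G m.-1; rewrite prednK // => <-.
  rewrite /G deriv_comp derivB derivC subr0 /q derivD derivZ derivX derivC addr0.
  by rewrite alg_polyC coefMC mulfK.
have [y [yv fy]] := coef_comp_le_horner f^`() v m.-1 lam0.
exists y => //; apply: le_trans fy.
rewrite coef_deriv_comp absM absV -[G`_m *+ m]mulr_natr absM.
have [_ _ -> _] := Gdom; rewrite ler_wpM2r ?invr_ge0 ?abs_ge0 // ler_wpM2r ?abs_ge0 //.
by rewrite -G1; apply: dominant_horner1_le Gdom.
Qed.

End LocalDegree.

Section Orbits.
Variable f : {poly K}.

Lemma orbitS n x : orbit f n.+1 x = f.[orbit f n x]. Proof. by []. Qed.

Lemma orbitD m n x : orbit f (m + n) x = orbit f m (orbit f n x).
Proof. exact: iterD. Qed.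

Lemma filled_horner x : filled abs f x -> filled abs f f.[x].
Proof.
move=> fx esc; apply: fx => B; have [N hN] := esc B.
by exists N.+1 => -[|n] // Nn; rewrite /Defs.orbit iterSr; apply: hN.
Qed.

Lemma filled_orbit x k : filled abs f x -> filled abs f (orbit f k x).
Proof. by move=> fx; elim: k => // k IH; apply: filled_horner. Qed.

Lemma horner_fiter n x : (fiter f n).[x] = orbit f n x.
Proof. by elim: n => [|n IH]; rewrite /fiter ?hornerX //= horner_comp -/(fiter f n) IH. Qed.

Lemma root_deriv_fiter n w :
  root (fiter f n)^`() w -> exists2 k, (k < n)%N & root f^`() (orbit f k w).
Proof.
elim: n => [|n IH]; first by rewrite /fiter /= derivX /root hornerC oner_eq0.
rewrite /fiter iterS -/(fiter f n) deriv_comp /root hornerM horner_comp.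
rewrite horner_fiter mulf_eq0 => /orP[|/IH [k kn fk]]; first by exists n.
by exists k => //; apply: ltnW.
Qed.

Lemma critvals_orbit n v : critvals f n v ->
  exists c j, [/\ root f^`() c, (0 < j <= n)%N & v = orbit f j c].
Proof.
case=> w [/root_deriv_fiter [k kn fk] ->].
exists (orbit f k w), (n - k)%N; rewrite subn_gt0 kn leq_subr.
by split=> //; rewrite horner_fiter -orbitD subnK // ltnW.
Qed.

Lemma invariant_disk_filled c eps m T : (0 < m)%N ->
  (forall u, abs (u - c) < eps -> abs (orbit f m u - c) < eps) ->
  (forall u, abs (u - c) < eps -> abs u <= T) ->
  forall u, abs (u - c) < eps -> ~ escapes abs f u.
Proof.
move=> m0 stable bounded u uc esc.
have orbit_in k : abs (orbit f (k * m) u - c) < eps.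
  by elim: k => [|k IH] //; rewrite mulSn orbitD stable.
have [N hN] := esc T.
by have := hN (N * m)%N (leq_pmulr _ m0); rewrite ltNge bounded.
Qed.

End Orbits.

Lemma pbase_gt1 : 1 < pbase abs.
Proof.
rewrite /pbase; case: ifPn => [char_gt0|]; last by rewrite expR_gt1.
have [ex|nex] := pselect (exists q, [set q | prime q /\ abs q%:R < 1] q).
  by have [qP _] := xgetPex 0%N ex; rewrite ltr1n prime_gt1.
by move: char_gt0; rewrite /res_char xgetPN // => q qP; apply: nex; exists q.
Qed.

Lemma Ds_empty f s c v : Rf abs f <= 0 -> ~ Ds abs f s c v.
Proof.
move=> Rf_le0; rewrite /Ds /odisk /= ltNge; apply/negP.
by rewrite (le_trans _ (abs_ge0 _)) // mulr_le0_ge0 ?powR_ge0.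
Qed.

Section Dynamics.
Variable f : {poly K}.
Hypothesis Hdeg : (2 < size f)%N.

Let lc := abs (lead_coef f).

Definition escape_radius := 1 + (2 + \sum_(i < size f) abs f`_i) / lc.

Lemma abs_lead_coef_gt0 : 0 < lc.
Proof.
by rewrite abs_gt0 // lead_coef_eq0 -size_poly_gt0 (ltn_trans _ Hdeg).
Qed.

Lemma escape_radius_ge1 : 1 <= escape_radius.
Proof.
rewrite lerDl divr_ge0 ?(ltW abs_lead_coef_gt0) // addr_ge0 // sumr_ge0 // => i _.
exact: abs_ge0.
Qed.

Lemma escape_radius_lt x :
  escape_radius < abs x -> 2 + \sum_(i < size f) abs f`_i < lc * abs x.
Proof.
move=> xE; have lc0 := abs_lead_coef_gt0.
rewrite mulrC -ltr_pdivrMr //; apply: lt_trans xE.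
by rewrite /escape_radius ltrDr ltr01.
Qed.

Lemma escape_step x : escape_radius < abs x -> 2 * abs x <= abs f.[x].
Proof.
move=> xE; have lc0 := abs_lead_coef_gt0; have lcx := escape_radius_lt xE.
have S0 : 0 <= \sum_(i < size f) abs f`_i by apply: sumr_ge0 => i _; apply: abs_ge0.
have x1 : 1 < abs x := le_lt_trans escape_radius_ge1 xE.
have x0 : 0 < abs x := lt_trans ltr01 x1.
have x_ge1 : 1 <= abs x := ltW x1.
have [d fd] : exists d, size f = d.+1 by exists (size f).-1; rewrite prednK // (ltn_trans _ Hdeg).
have d2 : (2 <= d)%N by rewrite -ltnS -fd.
have coef_lt i : abs f`_i < lc * abs x.
  apply: le_lt_trans lcx; rewrite -[abs f`_i]add0r lerD ?ler0n //.
  have [fi|/(nth_default 0) ->] := ltnP i (size f); last by rewrite abs0.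
  by rewrite (bigD1 (Ordinal fi)) //= lerDl sumr_ge0 // => j _; apply: abs_ge0.
have lower_lt (i : 'I_d) : abs (f`_i * x ^+ i) < abs (lead_coef f * x ^+ d).
  rewrite !absM !absX -/lc; apply: lt_le_trans (_ : lc * abs x * abs x ^+ i <= _).
    by rewrite ltr_pM2r ?exprn_gt0.
  by rewrite -mulrA -exprS ler_wpM2l ?(ltW lc0) // ler_weXn2l.
have lcE : lead_coef f = f`_d by rewrite lead_coefE fd.
rewrite horner_coef fd big_ord_recr /= -lcE addrC absD_small; last first.
  by apply: abs_sum_lt => [|i _]; rewrite ?lower_lt // absM absX mulr_gt0 ?exprn_gt0.
rewrite absM absX -/lc; apply: le_trans (_ : lc * abs x * abs x <= _).
  by rewrite ler_pM2r // ltW // (le_lt_trans _ lcx) // lerDl.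
by rewrite -mulrA -expr2 ler_wpM2l ?(ltW lc0) // ler_weXn2l.
Qed.

Lemma orbit_escape_growth x n :
  escape_radius < abs x -> n.+1%:R * abs x <= abs (orbit f n x).
Proof.
move=> xE; have x0 : 0 <= abs x := abs_ge0 x.
elim: n => [|n IH]; first by rewrite mul1r.
have nx : abs x <= abs (orbit f n x) by apply: le_trans IH; rewrite ler_peMl ?ler1n.
rewrite orbitS; apply: le_trans (escape_step (lt_le_trans xE nx)).
by rewrite -addn1 natrD mulrDl mul1r mulr2n mulrDl mul1r lerD.
Qed.

Lemma escapes_of_escape_radius x : escape_radius < abs x -> escapes abs f x.
Proof.
move=> xE B; have x0 : 0 < abs x := lt_le_trans ltr01 (le_trans escape_radius_ge1 (ltW xE)).
have := archi_boundP (divr_ge0 (normr_ge0 B) (ltW x0)).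
set N := Num.Def.archi_bound _ => BN.
exists N => n Nn; apply: lt_le_trans (orbit_escape_growth n xE).
rewrite -ltr_pdivrMr //; apply: (@le_lt_trans _ _ (`|B| / abs x)).
  by apply: ler_wpM2r; rewrite ?invr_ge0 ?(ltW x0) ?ler_norm.
by apply: lt_le_trans BN _; rewrite ler_nat (leq_trans Nn).
Qed.

Lemma filled_le_escape_radius x : filled abs f x -> abs x <= escape_radius.
Proof. by move=> fx; rewrite leNgt; apply/negP => /escapes_of_escape_radius. Qed.

Lemma local_degs_le m : local_degs abs f m -> (m <= (size f).-1)%N.
Proof.
case=> [->//|[a [r [_ ->]]]].
by rewrite /local_deg (leq_trans (count_size _ _)) // size_rootseq_subC // ltnW.
Qed.

Lemma kappa_le_logp m : local_degs abs f m -> kappa abs f <= logp abs (abs m%:R).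
Proof.
move=> fm; apply: ge_inf; last by exists m.
set d := (size f).-1; exists (- \sum_(i < d.+1) `|logp abs (abs i%:R)|) => _ [k fk <-].
have kd : (k < d.+1)%N by rewrite ltnS local_degs_le.
rewrite lerNl; apply: le_trans (_ : `|logp abs (abs k%:R)| <= _).
  by rewrite -normrN ler_norm.
by rewrite (bigD1 (Ordinal kd)) //= lerDl sumr_ge0.
Qed.

Lemma invabs_le_pow_kappa m : local_degs abs f m -> (0 < m)%N ->
  (abs m%:R)^-1 <= powR (pbase abs) (- kappa abs f).
Proof.
move=> fm m0; have p1 := pbase_gt1; have m_gt0 := abs_natr_gt0 m0.
apply: le_trans (_ : powR (pbase abs) (- logp abs (abs m%:R)) <= _); last first.
  by apply: ler_powR; [exact: ltW | rewrite lerN2 kappa_le_logp].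
rewrite /powR ifN; last by rewrite gt_eqF // (lt_trans ltr01).
by rewrite /logp mulNr divfK ?gt_eqF ?ln_gt0 // expRN lnK // posrE.
Qed.

Lemma Rf_le_escape_radius c : filled abs f c -> Rf abs f <= escape_radius.
Proof.
move=> fc; apply: ge_sup; first by exists 0, c => //; exists c; rewrite ?subrr ?abs0.
move=> _ [x fx [y fy <-]]; apply: absD_le; first exact: filled_le_escape_radius.
by rewrite absN filled_le_escape_radius.
Qed.

Lemma xi_disk_le y : xi_disk abs f y -> abs y <= escape_radius.
Proof.
case=> x fx yx; apply: abs_le_dist (filled_le_escape_radius fx) _.
exact: le_trans yx (Rf_le_escape_radius fx).
Qed.

Lemma horner_le_norm_xi p y : xi_disk abs f y -> abs p.[y] <= norm_xi abs f p.
Proof.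
move=> fy; apply: ub_le_sup; last by exists y.
exists (majorant p escape_radius) => _ [w fw <-].
exact/horner_le_majorant/xi_disk_le.
Qed.

Lemma exists_exit_step c : julia abs f c -> 0 < Rf abs f -> exists u v,
  [/\ filled abs f v, abs (u - v) <= Rf abs f & Rf abs f < abs (f.[u] - f.[v])].
Proof.
move=> [fc near_esc] Rf_gt0; have [y0 [y0c esc]] := near_esc _ Rf_gt0.
have y0_in : xi_disk abs f y0 by exists c => //; apply: ltW.
have [k [in_k out_k]] : exists k, xi_disk abs f (orbit f k y0) /\ ~ xi_disk abs f (orbit f k.+1 y0).
  apply: contrapT => stay; have [N hN] := esc escape_radius.
  have in_all n : xi_disk abs f (orbit f n y0).
    by elim: n => // n IH; apply: contrapT => out; apply: stay; exists n.
  by have := hN N (leqnn N); rewrite ltNge xi_disk_le.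
case: in_k => v fv uv; exists (orbit f k y0), v; split=> //.
rewrite ltNge; apply/negP => small; apply: out_k.
by exists f.[v]; first exact: filled_horner.
Qed.

(* The exit step of an orbit leaving the disk of [xi_f] forces a point of that
   disk where [|f'|] beats [|deg_xi f|], whence [Xi_f > 1]. *)
Lemma Xi_gt1 c : julia abs f c -> 0 < Rf abs f -> 1 < Xi abs f.
Proof.
move=> jc Rf_gt0; have [u [v [fv uv exit]]] := exists_exit_step jc Rf_gt0.
have u_neq_v : u != v by apply: contraTneq exit => ->; rewrite subrr abs0 -leNgt ltW.
have [y yv fy] := deriv_lower_bound (ltnW Hdeg) u_neq_v.
set m := local_deg _ _ _ _ in fy.
have m_gt0 : (0 < m)%N by rewrite /m local_deg_gt0 ?abs_ge0 // ltnW.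
have fm : local_degs abs f m by right; exists v, (abs (u - v)); rewrite abs_ge0.
have uv_gt0 : 0 < abs (u - v) by rewrite abs_gt0 ?subr_eq0.
have m_lt : abs m%:R < abs f^`().[y].
  apply: lt_le_trans fy; rewrite mulrAC ltr_pMl ?abs_natr_gt0 // ltr_pdivlMr // mul1r.
  exact: le_lt_trans exit.
apply: lt_le_trans (_ : (abs m%:R)^-1 * abs f^`().[y] <= _).
  by rewrite mulrC ltr_pdivlMr ?abs_natr_gt0 // mul1r.
rewrite /Xi ler_pM ?invr_ge0 ?abs_ge0 ?invabs_le_pow_kappa //.
by apply: horner_le_norm_xi; exists v => //; apply: le_trans yv uv.
Qed.

Let E := escape_radius.

(* A Lipschitz constant of [f] on [|z| <= E] that also bounds the quadratic
   flatness of [f] at every critical point. *)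
Definition lip_const :=
  1 + majorant f E + \sum_(c <- rootseq f^`()) majorant (crit_quotient f c) E.

Lemma escape_radius_ge0 : 0 <= E. Proof. exact: le_trans ler01 escape_radius_ge1. Qed.

Lemma lip_const_ge1 : 1 <= lip_const.
Proof.
rewrite /lip_const -addrA lerDl addr_ge0 ?majorant_ge0 ?escape_radius_ge0 // sumr_ge0 // => c _.
exact/majorant_ge0/escape_radius_ge0.
Qed.

Lemma deriv_neq0 : f^`() != 0.
Proof.
have [d fd] : exists d, size f = d.+2.
  by move: Hdeg; case: (size f) => [|[|d]] // _; exists d.
apply/eqP => /(congr1 (fun p : {poly K} => p`_d)); rewrite coef_deriv coef0 -mulr_natr.
move/eqP; rewrite mulf_eq0 (pcharf0P _).1 // orbF.
have -> : f`_d.+1 = lead_coef f by rewrite lead_coefE fd.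
by rewrite lead_coef_eq0 -size_poly_eq0 fd.
Qed.

Lemma mem_rootseq_deriv c : (c \in rootseq f^`()) = root f^`() c.
Proof.
rewrite {2}(rootseqE f^`()) /root hornerZ mulf_eq0 lead_coef_eq0 (negPf deriv_neq0).
by rewrite -/(root _ c) root_prod_XsubC.
Qed.

Lemma horner_crit_le c u : root f^`() c -> abs u <= E ->
  abs (f.[u] - f.[c]) <= lip_const * abs (u - c) ^+ 2.
Proof.
move=> fc uE; apply: le_trans (horner_crit_quadratic fc uE) _.
rewrite mulrC ler_wpM2r ?exprn_ge0 ?abs_ge0 // /lip_const.
have := le_sum_mem (F := fun c => majorant (crit_quotient f c) E) (etrans (mem_rootseq_deriv c) fc).
have := majorant_ge0 f escape_radius_ge0.
by move=> f_ge0 /(_ (fun c => majorant_ge0 _ escape_radius_ge0)); lra.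
Qed.

Lemma horner_lip_le a b : abs a <= E -> abs b <= E ->
  abs (f.[a] - f.[b]) <= lip_const * abs (a - b).
Proof.
move=> aE bE; apply: le_trans (horner_lipschitz f aE bE escape_radius_ge1) _.
rewrite mulrC ler_wpM2r ?abs_ge0 // /lip_const.
have : 0 <= \sum_(c <- rootseq f^`()) majorant (crit_quotient f c) E.
  by apply: sumr_ge0 => c _; apply: majorant_ge0 escape_radius_ge0.
lra.
Qed.

Lemma orbit_crit_contract c u eps m : root f^`() c -> filled abs f c ->
  eps <= E -> lip_const ^+ m * eps <= 1 -> (0 < m)%N ->
  abs (u - c) < eps -> abs (orbit f m u - orbit f m c) < eps.
Proof.
move=> fc cK epsE Leps m0 uc; have L1 := lip_const_ge1.
have L0 : 0 <= lip_const := le_trans ler01 L1.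
have uc0 := abs_ge0 (u - c).
have shrink i : (i <= m)%N -> lip_const ^+ i * abs (u - c) ^+ 2 <= abs (u - c).
  move=> im; rewrite expr2 mulrCA ler_piMr // (le_trans _ Leps) //.
  by apply: ler_pM; rewrite ?exprn_ge0 ?ler_weXn2l // ltW.
have cE : abs c <= E := filled_le_escape_radius cK.
have near_E v w : abs (v - w) <= abs (u - c) -> abs w <= E -> abs v <= E.
  by move=> vw wE; apply: abs_le_dist wE (le_trans vw (ltW (lt_le_trans uc epsE))).
have step i : (0 < i <= m)%N ->
    abs (orbit f i u - orbit f i c) <= lip_const ^+ i * abs (u - c) ^+ 2.
  elim: i => // -[_ _ | i IH /andP[_ im]].
    by rewrite expr1 horner_crit_le // (near_E _ c) ?lexx.
  have IHi := IH (ltnW im); have ciE := filled_le_escape_radius (filled_orbit (k := i.+1) cK).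
  rewrite [orbit f i.+2 u]orbitS [orbit f i.+2 c]orbitS exprS -mulrA.
  apply: le_trans (horner_lip_le (near_E _ _ (le_trans IHi (shrink _ (ltnW im))) ciE) ciE) _.
  by rewrite ler_wpM2l.
apply: le_lt_trans (step m _) _; first by rewrite m0 leqnn.
exact: le_lt_trans (shrink m (leqnn m)) uc.
Qed.

Lemma no_return c x eps m : root f^`() c -> julia abs f c -> (0 < m)%N ->
  0 < eps -> eps <= E -> lip_const ^+ m * eps <= 1 ->
  abs (x - c) < eps -> ~ abs (orbit f m x - c) < eps.
Proof.
move=> fc [cK near_esc] m0 eps0 epsE Leps xc mxc.
have contract u := @orbit_crit_contract c u eps m fc cK epsE Leps m0.
have mc : abs (orbit f m c - c) < eps.
  by apply: abs_dist_lt_trans mxc; rewrite abs_distC contract.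
have stable u : abs (u - c) < eps -> abs (orbit f m u - c) < eps.
  by move=> uc; apply: abs_dist_lt_trans mc; apply: contract.
have bounded u : abs (u - c) < eps -> abs u <= E.
  by move=> uc; apply: abs_le_dist (filled_le_escape_radius cK) (ltW (lt_le_trans uc epsE)).
have [y [yc esc]] := near_esc eps eps0.
exact: invariant_disk_filled m0 stable bounded y yc esc.
Qed.

Lemma return_time_gt c x n m q t : root f^`() c -> julia abs f c -> 0 < Rf abs f ->
  lip_const <= Xi abs f ^+ q -> E <= Xi abs f ^+ t -> (t.*2 < n)%N -> (0 < m)%N ->
  Ds abs f n%:R c x -> Ds abs f n%:R c (orbit f m x) -> (n < q.*2 * m)%N.
Proof.
move=> fc jc Rf_gt0 Lq Et tn m0 xc mxc.
suff n_lt : (n < q * m + t)%N.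
  rewrite -mul2n -mulnA mul2n -(ltn_add2r n) addnn.
  apply: leq_trans (_ : n.*2 < (q * m + t).*2)%N _; first by rewrite ltn_double.
  by rewrite doubleD leq_add2l (ltnW tn).
rewrite ltnNge; apply/negP => mn.
have X1 := Xi_gt1 jc Rf_gt0; set X := Xi abs f in X1 Lq Et xc mxc.
have X0 : 0 < X := lt_trans ltr01 X1.
have X_ge1 : 1 <= X := ltW X1.
have Xn0 : 0 < X ^+ n := exprn_gt0 n X0.
have RfE : Rf abs f <= E := Rf_le_escape_radius jc.1.
have epsE : Rf abs f * powR X (- n%:R) = Rf abs f / X ^+ n.
  by rewrite powRN powR_mulrn // ltW.
rewrite /Ds /odisk /= epsE in xc mxc.
apply: (no_return fc jc m0 _ _ _ xc mxc).
- exact: divr_gt0.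
- apply: le_trans RfE; rewrite ler_pdivrMr //.
  by apply: ler_peMr; [exact: ltW | exact: exprn_ege1].
rewrite mulrA ler_pdivrMr // mul1r; apply: le_trans (_ : X ^+ (q * m) * X ^+ t <= _).
  have L0 : 0 <= lip_const := le_trans ler01 lip_const_ge1.
  apply: ler_pM; rewrite ?exprn_ge0 ?(ltW Rf_gt0) ?(le_trans RfE) //.
  by rewrite exprM lerXn2r // nnegrE exprn_ge0 // ltW.
by rewrite -exprD ler_weXn2l.
Qed.

Lemma critvals_few n (D : set K) k : (0 < n)%N ->
  (forall c j1 j2, root f^`() c -> (j1 < j2)%N ->
     D (orbit f j1 c) -> D (orbit f j2 c) -> (n < k * (j2 - j1))%N) ->
  exists s : seq K, (size s <= size (rootseq f^`()) * k.+1)%N /\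
    forall v, critvals f n v -> D v -> v \in s.
Proof.
move=> n0 sparse; pose hits c := [seq j <- iota 1 n | `[< D (orbit f j c) >]].
have hits_size c : root f^`() c -> (size (hits c) <= k.+1)%N.
  move=> fc; apply: size_sparse_le n0 _ _ _; rewrite ?filter_uniq ?iota_uniq //.
    by apply/allP => j; rewrite mem_filter mem_iota add1n ltnS => /and3P[].
  move=> j1 j2; rewrite !mem_filter => /andP[/asboolP Dj1 _] /andP[/asboolP Dj2 _].
  by move=> j12; apply: sparse fc j12 Dj1 Dj2.
exists [seq orbit f j c | c <- rootseq f^`(), j <- hits c]; split.
  have : all (root f^`()) (rootseq f^`()) by apply/allP => c; rewrite mem_rootseq_deriv.
  rewrite size_allpairs_dep; elim: (rootseq f^`()) => //= c rs IH /andP[fc rsf].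
  by rewrite mulSn leq_add ?IH ?hits_size.
move=> v /critvals_orbit [c [j [fc /andP[j0 jn] ->]]] Dv; apply/allpairsPdep.
exists c, j; split=> //; first by rewrite mem_rootseq_deriv.
by rewrite mem_filter mem_iota j0 add1n ltnS jn andbT asboolT.
Qed.

End Dynamics.
End Ultrametric.

Unset Implicit Arguments.
Set Strict Implicit.

Theorem lemma2p8 (R : realType) (K : closedFieldType) (abs : K -> R)
    (Hchar : [pchar K] =i pred0)
    (Habs : nonarch_abs abs) (Hnt : nontrivial_abs abs) (Hcomp : complete_abs abs)
    (f : {poly K}) (Hdeg : (2 < size f)%N)
    (HCJ : exists c, crit f c /\ julia abs f c) :
  exists (M N : nat), (1 <= M)%N /\ (1 <= N)%N /\
    forall c, crit f c -> julia abs f c ->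
    forall n, (N <= n)%N ->
      exists s : seq K, (size s <= M)%N /\
        forall v, critvals f n v -> Ds abs f n%:R c v -> v \in s.
Proof.
have [Rf_le0|Rf_gt0] := lerP (Rf abs f) 0.
  exists 1%N, 1%N; do 2!split=> //; move=> c _ _ n _; exists [::]; split=> // v _.
  by move=> /(Ds_empty Habs Rf_le0).
case: HCJ => c0 [_ jc0]; have X1 := Xi_gt1 Habs Hchar Hdeg jc0 Rf_gt0.
have [q Lq] := exists_expr_ge (lip_const abs f) X1.
have [t Et] := exists_expr_ge (escape_radius abs f) X1.
exists (size (rootseq f^`()) * (q.*2).+1).+1, t.*2.+1; do 2!split=> //.
move=> c fc jc n tn; have n0 : (0 < n)%N := leq_trans (ltn0Sn _) tn.
have returns_sparse c' j1 j2 : root f^`() c' -> (j1 < j2)%N ->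
    Ds abs f n%:R c (orbit f j1 c') -> Ds abs f n%:R c (orbit f j2 c') ->
    (n < q.*2 * (j2 - j1))%N.
  move=> _ j12 Dj1 Dj2; have m0 : (0 < j2 - j1)%N by rewrite subn_gt0.
  apply: (return_time_gt Habs Hchar Hdeg fc jc Rf_gt0 Lq Et tn m0 Dj1).
  by rewrite -orbitD subnK // ltnW.
have [s [s_size s_mem]] := critvals_few Hchar Hdeg n0 returns_sparse.
by exists s; rewrite ltnW.
Qed.
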